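(* Let $A\in S^n_+$, $b\in\mathbb{R}^n$, $c\in\mathbb{R}$, $r>0$. If $A$ is not nonexpansive, then $f(x)=\frac r2\langle x,Ax\rangle+\langle b,x\rangle+c$ is not the Moreau envelope $e_rg$ of any proper, lower semicontinuous, convex function $g$.
   Context: $S^n_+$ is the set of symmetric positive semidefinite $n\times n$ matrices; $A$ is nonexpansive if $\|Ax-Ay\|\le\|x-y\|$ for all $x,y$. $e_rg(x)=\inf_y\{g(y)+\frac r2\|y-x\|^2\}$. *)

From HB Require Import structures.
From mathcomp Require Import all_boot all_order all_algebra.
From mathcomp Require Import all_classical all_reals all_analysis.
Set Implicit Arguments. Unset Strict Implicit. Unset Printing Implicit Defensive.
Import Order.TTheory GRing.Theory Num.Theory.
Import numFieldNormedType.Exports.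
Local Open Scope ring_scope.
Local Open Scope classical_set_scope.

Definition inner {R : realType} {n : nat} (x y : 'cV[R]_n) : R := (x^T *m y) 0 0.
Definition enorm {R : realType} {n : nat} (x : 'cV[R]_n) : R := Num.sqrt (inner x x).

Definition psd {R : realType} {n : nat} (A : 'M[R]_n) : Prop :=
  A^T = A /\ forall x : 'cV[R]_n, 0 <= inner x (A *m x).

Definition nonexpansive_mx {R : realType} {n : nat} (A : 'M[R]_n) : Prop :=
  forall x y : 'cV[R]_n, enorm (A *m x - A *m y) <= enorm (x - y).

Definition proper_fun {R : realType} {n : nat} (g : 'cV[R]_n -> \bar R) : Prop :=
  (forall x, g x != -oo%E) /\ (exists x, g x != +oo%E).

Definition econvex {R : realType} {n : nat} (g : 'cV[R]_n -> \bar R) : Prop :=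
  forall (x y : 'cV[R]_n) (t : R), 0 < t < 1 ->
    (g (t *: x + (1 - t) *: y)%R <= t%:E * g x + (1 - t)%:E * g y)%E.

Definition moreau_env {R : realType} {n : nat} (r : R) (g : 'cV[R]_n -> \bar R)
  (x : 'cV[R]_n) : \bar R :=
  ereal_inf [set (g y + (r / 2 * enorm (y - x) ^+ 2)%:E)%E | y in [set: 'cV[R]_n]].

Definition quadf {R : realType} {n : nat} (r : R) (A : 'M[R]_n) (b : 'cV[R]_n) (c : R)
  (x : 'cV[R]_n) : R := r / 2 * inner x (A *m x) + inner b x + c.

Definition lsc {R : realType} {n : nat} (g : 'cV[R]_n -> \bar R) : Prop :=
  lower_semicontinuous g.

(* If f = e_r g, then for every y the two bounds f(x ± v) <= g y + r/2 |y - x ∓ v|^2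
   add up, by the parallelogram law, to f(x+v) + f(x-v) <= 2 (g y + r/2 |y - x|^2)
   + r |v|^2; taking the infimum over y gives the midpoint concavity inequality
   f(x+v) + f(x-v) <= 2 f(x) + r |v|^2.  For the quadratic f the left-hand side
   minus 2 f(x) is r <v, Av>, so <v, Av> <= |v|^2 for all v, i.e. A <= I.  A
   positive semidefinite A with A <= I is nonexpansive. *)
From HB Require Import structures.
From mathcomp Require Import all_boot all_order all_algebra.
From mathcomp Require Import all_classical all_reals all_analysis.
From mathcomp Require Import lra.
Import Order.TTheory GRing.Theory Num.Theory.
Local Open Scope ring_scope.

Section InnerProduct.
Context {R : realType} {n : nat}.
Implicit Types (x y z : 'cV[R]_n) (A : 'M[R]_n).

Lemma innerDl x y z : inner (x + y) z = inner x z + inner y z.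
Proof. by rewrite /inner linearD /= mulmxDl mxE. Qed.

Lemma innerDr x y z : inner x (y + z) = inner x y + inner x z.
Proof. by rewrite /inner mulmxDr mxE. Qed.

Lemma innerBl x y z : inner (x - y) z = inner x z - inner y z.
Proof. by rewrite innerDl /inner linearN /= mulNmx [X in _ + X]mxE. Qed.

Lemma innerBr x y z : inner x (y - z) = inner x y - inner x z.
Proof. by rewrite innerDr /inner mulmxN [X in _ + X]mxE. Qed.

Lemma innerC x y : inner x y = inner y x.
Proof. by rewrite /inner -[in LHS](trmxK (x^T *m y)) trmx_mul trmxK mxE. Qed.

Lemma inner_sym_mx A x y : A^T = A -> inner x (A *m y) = inner (A *m x) y.
Proof. by move=> symA; rewrite /inner mulmxA trmx_mul symA. Qed.

Lemma inner_ge0 x : 0 <= inner x x.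
Proof. by rewrite /inner mxE sumr_ge0 // => i _; rewrite mxE -expr2 sqr_ge0. Qed.

Lemma enorm_sqr x : enorm x ^+ 2 = inner x x.
Proof. by rewrite /enorm sqr_sqrtr // inner_ge0. Qed.

Lemma parallelogram x y :
  inner (x + y) (x + y) + inner (x - y) (x - y) = 2 * (inner x x + inner y y).
Proof.
by rewrite !(innerBl, innerBr, innerDl, innerDr) [inner y x]innerC; lra.
Qed.

End InnerProduct.

Section Nonexpansive.
Context {R : realType} {n : nat} (A : 'M[R]_n).
Hypotheses (psdA : psd A) (A_le1 : forall v, inner v (A *m v) <= inner v v).

(* Expand 0 <= <v - Av, A (v - Av)> and use A <= I on v and on Av. *)
Lemma psd_le1_inner_mulmx_le v : inner (A *m v) (A *m v) <= inner v v.
Proof.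
have [symA A_ge0] := psdA.
have AvAv : inner v (A *m (A *m v)) = inner (A *m v) (A *m v).
  by rewrite inner_sym_mx.
have := A_ge0 (v - A *m v).
rewrite mulmxBr !(innerBl, innerBr) AvAv.
have := A_le1 v; have := A_le1 (A *m v); lra.
Qed.

Lemma psd_le1_nonexpansive : nonexpansive_mx A.
Proof.
by move=> x y; rewrite /enorm -mulmxBr ler_sqrt ?inner_ge0 ?psd_le1_inner_mulmx_le.
Qed.

End Nonexpansive.

Section MoreauEnvelope.
Context {R : realType} {n : nat} (r : R) (g : 'cV[R]_n -> \bar R).
Local Open Scope ereal_scope.

Lemma moreau_env_le x y : moreau_env r g x <= g y + (r / 2 * enorm (y - x) ^+ 2)%:E.
Proof. by apply: ereal_inf_lbound; exists y. Qed.

Lemma moreau_env_ge (a : \bar R) x :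
  (forall y, a <= g y + (r / 2 * enorm (y - x) ^+ 2)%:E) -> a <= moreau_env r g x.
Proof. by move=> a_le; apply: le_ereal_inf_tmp => _ [y _ <-]; exact: a_le. Qed.

Lemma moreau_env_midpoint_le {f : 'cV[R]_n -> R} :
  (forall y, g y != -oo) -> (forall x, (f x)%:E = moreau_env r g x) ->
  forall x v, (f (x + v) + f (x - v) <= 2 * f x + r * inner v v)%R.
Proof.
move=> g_neqNy fE x v.
suff : ((f (x + v) + f (x - v) - r * inner v v) / 2)%:E <= (f x)%:E.
  by rewrite lee_fin ler_pdivrMr // mulrC; lra.
rewrite fE; apply: moreau_env_ge => y.
have := moreau_env_le (x + v) y; have := moreau_env_le (x - v) y.
rewrite -!fE; move: (g_neqNy y); case: (g y) => [gy _| _ _ _ |//]; last first.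
  by rewrite addye ?leey.
rewrite -!EFinD !lee_fin !enorm_sqr.
have -> : (y - (x + v) = (y - x) - v)%R by rewrite opprD addrA.
have -> : (y - (x - v) = (y - x) + v)%R by rewrite opprD opprK addrA.
have := parallelogram (y - x)%R v; nra.
Qed.

End MoreauEnvelope.

Lemma quadf_midpoint (R : realType) (n : nat) (r : R) (A : 'M[R]_n)
    (b : 'cV[R]_n) (c : R) (x v : 'cV[R]_n) :
  quadf r A b c (x + v) + quadf r A b c (x - v) =
    2 * quadf r A b c x + r * inner v (A *m v).
Proof.
rewrite /quadf mulmxDr mulmxBr !(innerBl, innerBr, innerDl, innerDr).
by rewrite !mulrDr; lra.
Qed.

Theorem proposition4p44 (R : realType) (n : nat) (A : 'M[R]_n) (b : 'cV[R]_n)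
    (c r : R) :
  psd A -> 0 < r -> ~ nonexpansive_mx A ->
  ~ exists g : 'cV[R]_n -> \bar R,
      [/\ proper_fun g, lsc g, econvex g &
          forall x, (quadf r A b c x)%:E = moreau_env r g x].
Proof.
move=> psdA r_gt0 not_nonexp [g [[g_neqNy _] _ _ fE]].
apply/not_nonexp/psd_le1_nonexpansive => // v.
have := moreau_env_midpoint_le r g g_neqNy fE 0 v.
by rewrite quadf_midpoint lerD2l ler_pM2l.
Qed.
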